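(* For every behavior $r$ and every language $K\subseteq\Sigma^*$, $L(\mathcal C(r),K)=L(\mathcal C(r))\,\|\,K$.
   Context: Let $\Sigma$ be a finite alphabet. Behaviors are the terms generated by $r,s ::= \phi \mid \varepsilon \mid x\ (x\in\Sigma) \mid r+s \mid r\cdot s \mid r^* \mid \mathrm{fork}(r)$. For words $v,w\in\Sigma^*$ the shuffle $v\| w\subseteq \Sigma^*$ is defined by $\varepsilon\|w=\{w\}$, $v\|\varepsilon=\{v\}$, $xv\|yw=\{x\}\cdot(v\|yw)\cup\{y\}\cdot(xv\|w)$ for $x,y\in\Sigma$, and it is lifted to languages by $L\|M=\bigcup_{v\in L,w\in M} v\|w$; $L\cdot M$ denotes concatenation of languages. For $K\subseteq\Sigma^*$ the trace language $L(r,K)\subseteq\Sigma^*$ is defined by structural recursion: $L(\phi,K)=\emptyset$, $L(\varepsilon,K)=K$, $L(x,K)=\{x\}\cdot K$, $L(r+s,K)=L(r,K)\cup L(s,K)$, $L(r\cdot s,K)=L(r,L(s,K))$, $L(r^*,K)$ is the least fixpoint (w.r.t. $\subseteq$) of the monotone map $X\mapsto L(r,X)\cup K$, and $L(\mathrm{fork}(r),K)=L(r)\|K$, where $L(r)=L(r,\{\varepsilon\})$. The concurrent part $\mathcal C(r)$ is the behavior defined by: $\mathcal C(\phi)=\phi$, $\mathcal C(\varepsilon)=\varepsilon$, $\mathcal C(x)=\phi$, $\mathcal C(r+s)=\mathcal C(r)+\mathcal C(s)$, $\mathcal C(r\cdot s)=\mathcal C(r)\cdot\mathcal C(s)$, $\mathcal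 C(r^* )=\mathcal C(r)^*$, $\mathcal C(\mathrm{fork}(r))=\mathrm{fork}(r)$. *)

From Stdlib Require Import List.
Import ListNotations.
Set Implicit Arguments.

Section Behaviors.
Variable Sigma : Type.

Definition word := list Sigma.
Definition lang := word -> Prop.

Inductive behavior : Type :=
| Bphi : behavior
| Beps : behavior
| Bsym : Sigma -> behavior
| Bplus : behavior -> behavior -> behavior
| Bseq : behavior -> behavior -> behavior
| Bstar : behavior -> behavior
| Bfork : behavior -> behavior.

(* shuffle of words: shuffle v w u  <->  u \in v || w *)
Inductive shuffle : word -> word -> word -> Prop :=
| sh_nil_l : forall w, shuffle [] w w
| sh_nil_r : forall v, shuffle v [] v
| sh_left : forall x v y w u, shuffle v (y :: w) u -> shuffle (x :: v) (y :: w) (x :: u)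
| sh_right : forall x v y w u, shuffle (x :: v) w u -> shuffle (x :: v) (y :: w) (y :: u).

Definition shuffle_lang (L M : lang) : lang :=
  fun u => exists v w, L v /\ M w /\ shuffle v w u.

Definition lang_incl (L M : lang) : Prop := forall w, L w -> M w.

(* least fixpoint (w.r.t. inclusion) of a monotone map F : intersection of
   all prefixed points F X ⊆ X (Knaster–Tarski). *)
Definition lfp (F : lang -> lang) : lang :=
  fun w => forall X : lang, lang_incl (F X) X -> X w.

Fixpoint trace (r : behavior) (K : lang) {struct r} : lang :=
  match r with
  | Bphi => fun _ => False
  | Beps => K
  | Bsym x => fun w => exists w', w = x :: w' /\ K w'
  | Bplus r1 r2 => fun w => trace r1 K w \/ trace r2 K w
  | Bseq r1 r2 => trace r1 (trace r2 K)
  | Bstar r1 => lfp (fun X w => trace r1 X w \/ K w)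
  | Bfork r1 => shuffle_lang (trace r1 (fun w => w = [])) K
  end.

Definition trace0 (r : behavior) : lang := trace r (fun w => w = []).

Fixpoint conc (r : behavior) : behavior :=
  match r with
  | Bphi => Bphi
  | Beps => Beps
  | Bsym _ => Bphi
  | Bplus r1 r2 => Bplus (conc r1) (conc r2)
  | Bseq r1 r2 => Bseq (conc r1) (conc r2)
  | Bstar r1 => Bstar (conc r1)
  | Bfork r1 => Bfork r1
  end.

End Behaviors.

Definition finite_type (A : Type) : Prop := exists l : list A, forall x : A, In x l.

(* The concurrent part C(r) contains no letters outside of forks, so each of its
   traces is an interleaving of fork bodies, and the continuation K runs in
   parallel with all of them.  Hence L(C(r), -) is the map K |-> L(C(r)) || K,
   proved by induction on r: the sequential case is associativity of the
   shuffle, and the star case is an analogue of Arden's rule for the shuffle. *)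
From Stdlib Require Import List.
Import ListNotations.
Set Implicit Arguments.

(* [shuffle] has two overlapping base cases; this symmetric presentation, with a
   single base case, is the one that supports induction. *)
Inductive interleave {A : Type} : list A -> list A -> list A -> Prop :=
| il_nil : interleave [] [] []
| il_left : forall x v w u, interleave v w u -> interleave (x :: v) w (x :: u)
| il_right : forall y v w u, interleave v w u -> interleave v (y :: w) (y :: u).

Section Interleave.
Variable A : Type.
Implicit Types u v w : list A.

Lemma interleave_nil_l w : interleave [] w w.
Proof. induction w; constructor; auto. Qed.

Lemma interleave_nil_r v : interleave v [] v.
Proof. induction v; constructor; auto. Qed.

Lemma shuffle_nil_l_inv w u : shuffle [] w u -> u = w.
Proof. intro H; inversion H; auto. Qed.

Lemma shuffle_nil_r_inv v u : shuffle v [] u -> u = v.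
Proof. intro H; inversion H; auto. Qed.

Lemma shuffle_interleave v w u : shuffle v w u <-> interleave v w u.
Proof.
  split; induction 1.
  - apply interleave_nil_l.
  - apply interleave_nil_r.
  - now constructor.
  - now constructor.
  - constructor.
  - destruct w as [|y w].
    + apply shuffle_nil_r_inv in IHinterleave; subst; apply sh_nil_r.
    + now apply sh_left.
  - destruct v as [|x v].
    + apply shuffle_nil_l_inv in IHinterleave; subst; apply sh_nil_l.
    + now apply sh_right.
Qed.

Lemma interleave_nil_l_inv w u : interleave [] w u -> u = w.
Proof. rewrite <- shuffle_interleave; apply shuffle_nil_l_inv. Qed.

Lemma interleave_nil_r_inv v u : interleave v [] u -> u = v.
Proof. rewrite <- shuffle_interleave; apply shuffle_nil_r_inv. Qed.

Lemma interleave_comm v w u : interleave v w u -> interleave w v u.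
Proof. induction 1; constructor; auto. Qed.

Lemma interleave_assoc_l u c t : interleave u c t ->
  forall a b, interleave a b u -> exists v, interleave b c v /\ interleave a v t.
Proof.
  induction 1 as [|x u c t _ IH|y u c t _ IH]; intros a b Hab.
  - inversion Hab; subst. exists []; split; constructor.
  - inversion Hab as [|? a' ? ? Hi|? ? b' ? Hi]; subst;
      destruct (IH _ _ Hi) as [v [Hbc Hav]].
    + exists v; split; [|constructor]; assumption.
    + exists (x :: v); split; constructor; assumption.
  - destruct (IH _ _ Hab) as [v [Hbc Hav]].
    exists (y :: v); split; constructor; assumption.
Qed.

Lemma interleave_assoc_r a b c v t :
  interleave b c v -> interleave a v t -> exists u, interleave a b u /\ interleave u c t.
Proof.
  intros Hbc Hav.
  destruct (interleave_assoc_l (interleave_comm Hav) (interleave_comm Hbc))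
    as [u [Hba Hcu]].
  exists u; split; apply interleave_comm; assumption.
Qed.

End Interleave.

Section ShuffleLang.
Variable A : Type.
Implicit Types L M N K : lang A.

Lemma shuffle_langE L M u :
  shuffle_lang L M u <-> exists v w, L v /\ M w /\ interleave v w u.
Proof.
  unfold shuffle_lang; split; intros [v [w [Hv [Hw Hu]]]]; exists v, w;
    rewrite shuffle_interleave in *; auto.
Qed.

Lemma shuffle_lang_mono L L' M M' :
  lang_incl L L' -> lang_incl M M' -> lang_incl (shuffle_lang L M) (shuffle_lang L' M').
Proof. intros HL HM u [v [w [Hv [Hw Hu]]]]; exists v, w; auto. Qed.

Lemma shuffle_lang_ext L L' M M' :
  (forall u, L u <-> L' u) -> (forall u, M u <-> M' u) ->
  forall u, shuffle_lang L M u <-> shuffle_lang L' M' u.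
Proof.
  intros HL HM u; split; apply shuffle_lang_mono; intros x; firstorder.
Qed.

Lemma shuffle_lang_eps_l K u : shuffle_lang (fun w => w = []) K u <-> K u.
Proof.
  rewrite shuffle_langE; split.
  - intros [v [w [-> [Hw Hu]]]]; now rewrite (interleave_nil_l_inv Hu).
  - intro Hu; exists [], u; auto using interleave_nil_l.
Qed.

Lemma shuffle_lang_eps_r L u : shuffle_lang L (fun w => w = []) u <-> L u.
Proof.
  rewrite shuffle_langE; split.
  - intros [v [w [Hv [-> Hu]]]]; now rewrite (interleave_nil_r_inv Hu).
  - intro Hu; exists u, []; auto using interleave_nil_r.
Qed.

Lemma shuffle_lang_assoc L M N u :
  shuffle_lang (shuffle_lang L M) N u <-> shuffle_lang L (shuffle_lang M N) u.
Proof.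
  rewrite !shuffle_langE; split.
  - intros [v [c [Hv [Hc Hvc]]]]; apply shuffle_langE in Hv as [a [b [Ha [Hb Hab]]]].
    destruct (interleave_assoc_l Hvc Hab) as [m [Hbc Ham]].
    exists a, m; repeat split; auto. apply shuffle_langE; exists b, c; auto.
  - intros [a [m [Ha [Hm Ham]]]]; apply shuffle_langE in Hm as [b [c [Hb [Hc Hbc]]]].
    destruct (interleave_assoc_r Hbc Ham) as [v [Hab Hvc]].
    exists v, c; repeat split; auto. apply shuffle_langE; exists a, b; auto.
Qed.

Lemma lfp_least (F : lang A -> lang A) X : lang_incl (F X) X -> lang_incl (lfp F) X.
Proof. intros HX w Hw; now apply Hw. Qed.

Lemma lfp_fold (F : lang A -> lang A) :
  (forall X Y, lang_incl X Y -> lang_incl (F X) (F Y)) -> lang_incl (F (lfp F)) (lfp F).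
Proof.
  intros Hmono w Hw X HX. apply HX. revert Hw. apply Hmono, lfp_least, HX.
Qed.

Section Arden.
Variables (T : lang A -> lang A) (L : lang A).
Hypothesis T_shuffle : forall X w, T X w <-> shuffle_lang L X w.

Lemma shuffle_step_mono K X Y :
  lang_incl X Y -> lang_incl (fun w => T X w \/ K w) (fun w => T Y w \/ K w).
Proof.
  intros HXY w [Hw|Hw]; [left|right; exact Hw].
  apply T_shuffle; apply T_shuffle in Hw; revert Hw; now apply shuffle_lang_mono.
Qed.

(* Arden's rule for the shuffle: the least solution of X = (L || X) ∪ K is
   L^* || K, where L^* is the least solution of X = (L || X) ∪ {ε}. *)
Lemma shuffle_arden K w :
  lfp (fun X w => T X w \/ K w) w <-> shuffle_lang (lfp (fun X w => T X w \/ w = [])) K w.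
Proof.
  pose proof (lfp_fold _ (shuffle_step_mono (fun w => w = []))) as star_fold.
  pose proof (lfp_fold _ (shuffle_step_mono K)) as sol_fold.
  split.
  - revert w; apply lfp_least; intros u [Hu|Hu].
    + apply T_shuffle, shuffle_lang_assoc in Hu; revert Hu.
      apply shuffle_lang_mono; [|intros x Hx; exact Hx].
      intros x Hx; apply star_fold; left; now apply T_shuffle.
    + apply shuffle_langE; exists [], u; repeat split; auto using interleave_nil_l.
  - intros [v [k [Hv [Hk Hvk]]]]; rewrite shuffle_interleave in Hvk.
    (* induction on v in L^*, generalized over k and u *)
    pose (Y := fun v => forall k u, K k -> interleave v k u -> lfp (fun X w => T X w \/ K w) u).
    enough (HY : lang_incl (lfp (fun X w => T X w \/ w = [])) Y) by exact (HY v Hv k w Hk Hvk).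
    apply lfp_least; intros v0 [H0 | ->] k0 u0 Hk0 Hu0.
    + apply T_shuffle, shuffle_langE in H0 as [l [y [Hl [Hy Hly]]]].
      destruct (interleave_assoc_l Hu0 Hly) as [m [Hyk Hlm]].
      apply sol_fold; left; apply T_shuffle, shuffle_langE.
      exists l, m; repeat split; auto. exact (Hy k0 m Hk0 Hyk).
    + rewrite (interleave_nil_l_inv Hu0); apply sol_fold; now right.
Qed.

End Arden.

End ShuffleLang.

Lemma trace_conc_shuffle (Sigma : Type) (r : behavior Sigma) :
  forall K w, trace (conc r) K w <-> shuffle_lang (trace0 (conc r)) K w.
Proof.
  unfold trace0; induction r as [| |x|r1 IH1 r2 IH2|r1 IH1 r2 IH2|r IH|r];
    intros K w; simpl.
  - split; [tauto|]; now intros [v [u [Hv _]]].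
  - symmetry; apply shuffle_lang_eps_l.
  - split; [tauto|]; now intros [v [u [Hv _]]].
  - rewrite IH1, IH2; split.
    + intros [[v [u Hvu]]|[v [u Hvu]]]; exists v, u; tauto.
    + intros [v [u [[Hv|Hv] Hu]]]; [left|right]; exists v, u; tauto.
  - set (L1 := trace (conc r1) (fun w => w = [])).
    set (L2 := trace (conc r2) (fun w => w = [])).
    transitivity (shuffle_lang L1 (shuffle_lang L2 K) w).
    + rewrite IH1; apply shuffle_lang_ext; intro u; [reflexivity|apply IH2].
    + rewrite <- shuffle_lang_assoc.
      apply shuffle_lang_ext; intro u; [symmetry; apply IH1|reflexivity].
  - exact (shuffle_arden _ IH K w).
  - apply shuffle_lang_ext; [|reflexivity].
    intro u; symmetry; apply shuffle_lang_eps_r.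
Qed.

Theorem lemma14 (Sigma : Type) (Hfin : finite_type Sigma)
  (r : behavior Sigma) (K : lang Sigma) :
  forall w : word Sigma,
    trace (conc r) K w <-> shuffle_lang (trace0 (conc r)) K w.
Proof.
  apply trace_conc_shuffle.
Qed.
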